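(* Let $L>0$ and let $X_1,\dots,X_t$ be independent nonnegative discrete random variables, each of which takes value either $0$ or a value at least $L$. If $\sum_{j=1}^t\mathbb{E}[X_j]\ge L$, then $\mathbb{E}[\max_j X_j]\ge L/2$. *)

From Stdlib Require Import Reals Lra List.
Open Scope R_scope.

(* A discrete probability space: countable sample space nat with mass p.
   (The joint law of finitely many discrete random variables is supported on
   a countable set, so this is without loss of generality.) *)
Definition is_pmf (p : nat -> R) : Prop :=
  (forall n, 0 <= p n) /\ infinite_sum p 1.

(* Extended nonnegative reals [0, +oo] for expectations. *)
Inductive ereal := EFin (r : R) | EInf.

Definition ele (c : R) (e : ereal) : Prop :=
  match e with EFin r => c <= r | EInf => True end.

Definition eadd (a b : ereal) : ereal :=
  match a, b with EFin x, EFin y => EFin (x + y) | _, _ => EInf end.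

Definition is_expect (p : nat -> R) (Y : nat -> R) (e : ereal) : Prop :=
  match e with
  | EFin r => infinite_sum (fun n => p n * Y n) r
  | EInf => forall M, exists N, M < sum_f_R0 (fun n => p n * Y n) N
  end.

Definition is_prob (p : nat -> R) (A : nat -> bool) (r : R) : Prop :=
  infinite_sum (fun n => if A n then p n else 0) r.

Definition eqRb (x y : R) : bool := if Req_EM_T x y then true else false.

Definition independent (p : nat -> R) (t : nat) (X : nat -> nat -> R) : Prop :=
  forall (a : nat -> R) (r : R) (rs : nat -> R),
    is_prob p (fun n => forallb (fun j => eqRb (X j n) (a j)) (seq 0 t)) r ->
    (forall j, (j < t)%nat -> is_prob p (fun n => eqRb (X j n) (a j)) (rs j)) ->
    r = fold_right Rmult 1 (map rs (seq 0 t)).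

(* max_{j<t} X_j (pointwise); the base 0 is harmless as the X_j are a.s. >= 0
   and t >= 1 under the hypotheses. *)
Definition maxX (t : nat) (X : nat -> nat -> R) (n : nat) : R :=
  fold_right Rmax 0 (map (fun j => X j n) (seq 0 t)).

Definition esum (t : nat) (E : nat -> ereal) : ereal :=
  fold_right eadd (EFin 0) (map E (seq 0 t)).

(* Let X_0, ..., X_(t-1) be independent, nonnegative, each 0 or >= L, with
   sum_j E[X_j] >= L.  Write P0 = P(all X_j = 0) = prod_j P(X_j = 0).

   - If P0 <= 1/2: whenever some X_j is nonzero, max_j X_j >= L, hence
     E[max] >= L * (1 - P0) >= L/2.
   - If P0 > 1/2: on the event O_j = "X_i = 0 for every i <> j" at most one
     term X_j 1_{O_j} is nonzero, so sum_j X_j 1_{O_j} <= max_j X_j.  By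
     independence P(X_j = v, O_j) >= P0 * P(X_j = v) for every value v, hence
     E[X_j 1_{O_j}] >= P0 * E[X_j] and E[max] >= P0 * sum_j E[X_j] >= L/2. *)
From Stdlib Require Import Reals Lra Lia List ClassicalEpsilon.
Open Scope R_scope.

Lemma infinite_sum_ext f g l :
  (forall n, f n = g n) -> infinite_sum f l -> infinite_sum g l.
Proof.
  intros Hfg Hf eps Heps; destruct (Hf eps Heps) as [N HN]; exists N; intros n Hn.
  rewrite <- (sum_eq f g n) by (intros; apply Hfg). now apply HN.
Qed.

Lemma infinite_sum_plus f g a b :
  infinite_sum f a -> infinite_sum g b -> infinite_sum (fun n => f n + g n) (a + b).
Proof.
  intros Hf Hg eps Heps; destruct (CV_plus _ _ _ _ Hf Hg eps Heps) as [N HN].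
  exists N; intros n Hn; rewrite sum_plus; now apply HN.
Qed.

Lemma infinite_sum_zero : infinite_sum (fun _ => 0) 0.
Proof.
  intros eps Heps; exists 0%nat; intros n _.
  replace (sum_f_R0 (fun _ => 0) n) with 0 by (induction n; simpl; lra).
  unfold Rdist; rewrite Rminus_0_r, Rabs_R0; lra.
Qed.

Lemma infinite_sum_scal f a c :
  infinite_sum f a -> infinite_sum (fun n => c * f n) (c * a).
Proof.
  intros Hf.
  assert (Hc : Un_cv (fun _ => c) c)
    by (intros eps Heps; exists 0%nat; intros; unfold Rdist;
        rewrite Rminus_diag, Rabs_R0; lra).
  intros eps Heps; destruct (CV_mult _ _ _ _ Hc Hf eps Heps) as [N HN].
  exists N; intros n Hn.
  replace (sum_f_R0 (fun i => c * f i) n) with (c * sum_f_R0 f n)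
    by (rewrite scal_sum; apply sum_eq; intros; ring).
  now apply HN.
Qed.

Lemma infinite_sum_le f g a b :
  (forall n, f n <= g n) -> infinite_sum f a -> infinite_sum g b -> a <= b.
Proof.
  intros Hfg Hf Hg.
  apply (@Rle_cv_lim (sum_f_R0 f) (sum_f_R0 g)); [|exact Hf|exact Hg].
  intro N; apply sum_Rle; intros; apply Hfg.
Qed.

Lemma infinite_sum_le_bound f e B :
  infinite_sum f e -> (forall N, sum_f_R0 f N <= B) -> e <= B.
Proof.
  intros He HB; destruct (Rle_lt_dec e B) as [|Hlt]; auto.
  destruct (He (e - B) ltac:(lra)) as [N HN]; specialize (HN N (le_n _)).
  specialize (HB N); unfold Rdist in HN; apply Rabs_def2 in HN; lra.
Qed.

Lemma is_expect_bounded p Y e B :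
  (forall N, sum_f_R0 (fun n => p n * Y n) N <= B) -> is_expect p Y e ->
  exists r, e = EFin r /\ r <= B.
Proof.
  intros HB He; destruct e as [r|]; simpl in He.
  - exists r; split; [reflexivity|]; exact (infinite_sum_le_bound _ _ _ He HB).
  - destruct (He B) as [N HN]; specialize (HB N); lra.
Qed.

Definition lsum {A} (l : list A) (F : A -> R) : R :=
  fold_right (fun a acc => F a + acc) 0 l.

Lemma lsum_nil {A} (F : A -> R) : lsum nil F = 0.
Proof. reflexivity. Qed.

Lemma lsum_cons {A} (a : A) l F : lsum (a :: l) F = F a + lsum l F.
Proof. reflexivity. Qed.

Lemma lsum_ext {A} (l : list A) F G : (forall a, F a = G a) -> lsum l F = lsum l G.
Proof. intros H; induction l; rewrite ?lsum_nil, ?lsum_cons; [|rewrite H, IHl]; reflexivity. Qed.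

Lemma lsum_scal {A} (l : list A) F c : lsum l (fun a => c * F a) = c * lsum l F.
Proof. induction l; rewrite ?lsum_nil, ?lsum_cons; [|rewrite IHl]; ring. Qed.

Lemma lsum_le {A} (l : list A) F G :
  (forall a, In a l -> F a <= G a) -> lsum l F <= lsum l G.
Proof.
  induction l as [|a l IH]; intros H; rewrite ?lsum_nil, ?lsum_cons; [lra|].
  apply Rplus_le_compat; [apply H; now left|apply IH; intros; apply H; now right].
Qed.

Lemma lsum_nonneg {A} (l : list A) F : (forall a, In a l -> 0 <= F a) -> 0 <= lsum l F.
Proof.
  intros H; apply (Rle_trans _ (lsum l (fun _ => 0))).
  - clear H; induction l; rewrite ?lsum_nil, ?lsum_cons; lra.
  - apply lsum_le; exact H.
Qed.

Lemma lsum_zero {A} (l : list A) F : (forall a, In a l -> F a = 0) -> lsum l F = 0.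
Proof.
  induction l as [|a l IH]; intros H; rewrite ?lsum_nil, ?lsum_cons; [reflexivity|].
  rewrite H by now left.
  rewrite IH by (intros; apply H; now right); ring.
Qed.

Lemma lsum_ge_term {A} (l : list A) F a :
  In a l -> (forall b, In b l -> 0 <= F b) -> F a <= lsum l F.
Proof.
  induction l as [|b l IH]; intros Ha H; [destruct Ha|]; rewrite lsum_cons.
  assert (0 <= F b) by (apply H; now left).
  assert (0 <= lsum l F) by (apply lsum_nonneg; intros; apply H; now right).
  destruct Ha as [<-|Ha]; [lra|].
  assert (F a <= lsum l F) by (apply IH; auto; intros; apply H; now right); lra.
Qed.

Lemma lsum_le_single (l : list nat) F k :
  NoDup l -> (forall j, In j l -> j <> k -> F j = 0) -> lsum l F <= Rmax (F k) 0.
Proof.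
  induction l as [|a l IH]; intros ND H; rewrite ?lsum_nil, ?lsum_cons; [apply Rmax_r|].
  inversion ND as [|? ? Hal NDl]; subst.
  destruct (Nat.eq_dec a k) as [->|Hak].
  - rewrite (lsum_zero l F); [generalize (Rmax_l (F k) 0); lra|].
    intros j Hj; apply H; [now right|]; intros ->; contradiction.
  - rewrite H by (auto; now left).
    assert (lsum l F <= Rmax (F k) 0) by (apply IH; auto; intros; apply H; auto; now right).
    lra.
Qed.

Lemma infinite_sum_lsum {A} (l : list A) (h : A -> nat -> R) (s : A -> R) :
  (forall a, In a l -> infinite_sum (h a) (s a)) ->
  infinite_sum (fun n => lsum l (fun a => h a n)) (lsum l s).
Proof.
  induction l as [|a l IH]; intros H.
  - exact infinite_sum_zero.
  - apply infinite_sum_plus; [apply H; now left|apply IH; intros; apply H; now right].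
Qed.

Lemma series_family_le (l : list nat) (h : nat -> nat -> R) (g : nat -> R) b :
  (forall a n, In a l -> 0 <= h a n) ->
  (forall n, lsum l (fun a => h a n) <= g n) -> infinite_sum g b ->
  exists s, (forall a, In a l -> infinite_sum (h a) (s a)) /\ lsum l s <= b.
Proof.
  intros H0 Hg Hb.
  assert (Hex : forall a, exists s, In a l -> infinite_sum (h a) s).
  { intro a; destruct (in_dec Nat.eq_dec a l) as [Ha|Ha].
    - assert (Hdom : forall n, 0 <= h a n <= g n).
      { intro n; split; [now apply H0|].
        eapply Rle_trans; [apply (lsum_ge_term l (fun a => h a n)); auto|apply Hg]. }
      destruct (Rseries_CV_comp (h a) g Hdom (exist _ b Hb)) as [s Hs]; now exists s.
    - exists 0; intros; contradiction. }
  set (s := fun a => proj1_sig (constructive_indefinite_description _ (Hex a))).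
  assert (Hs : forall a, In a l -> infinite_sum (h a) (s a))
    by (intro a; exact (proj2_sig (constructive_indefinite_description _ (Hex a)))).
  exists s; split; [exact Hs|].
  exact (infinite_sum_le _ _ _ _ Hg (infinite_sum_lsum l h s Hs) Hb).
Qed.

Lemma eqRb_spec x y : eqRb x y = true <-> x = y.
Proof. unfold eqRb; destruct (Req_EM_T x y); split; congruence. Qed.

Lemma lsum_select_le (V : list R) (b : R -> bool) x :
  NoDup V -> (forall v, In v V -> b v = true -> v = x) -> 0 <= x ->
  lsum V (fun v => if b v then v else 0) <= x.
Proof.
  induction V as [|v V IH]; intros ND H Hx; rewrite ?lsum_nil, ?lsum_cons; [lra|].
  inversion ND as [|? ? HvV NDV]; subst.
  destruct (b v) eqn:Ebv.
  - assert (v = x) as -> by (apply H; auto; now left).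
    rewrite lsum_zero; [lra|].
    intros a Ha; destruct (b a) eqn:Eba; auto.
    assert (a = x) as -> by (apply H; auto; now right); contradiction.
  - assert (lsum V (fun a => if b a then a else 0) <= x); [|lra].
    apply IH; auto; intros; apply H; auto; now right.
Qed.

Lemma lsum_select_ge (V : list R) x :
  In x V -> (forall v, In v V -> 0 <= v) ->
  x <= lsum V (fun v => if eqRb x v then v else 0).
Proof.
  intros Hx H; eapply Rle_trans; [|apply (lsum_ge_term V _ x Hx)].
  - cbv beta; assert (eqRb x x = true) as -> by now apply eqRb_spec. lra.
  - intros v Hv; destruct (eqRb x v); [now apply H|lra].
Qed.

Section DiscreteProbability.

Variable p : nat -> R.
Hypothesis Hp : is_pmf p.

Lemma pmf_nonneg n : 0 <= p n.
Proof. exact (proj1 Hp n). Qed.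

Lemma prob_exists (A : nat -> bool) : {r | is_prob p A r}.
Proof.
  apply (Rseries_CV_comp (fun n => if A n then p n else 0) p).
  - intro n; generalize (pmf_nonneg n); destruct (A n); lra.
  - exists 1; exact (proj2 Hp).
Qed.

Definition prob (A : nat -> bool) : R := proj1_sig (prob_exists A).

Lemma prob_spec A : is_prob p A (prob A).
Proof. exact (proj2_sig (prob_exists A)). Qed.

Lemma prob_bounds A : 0 <= prob A <= 1.
Proof.
  split; [refine (infinite_sum_le _ _ _ _ _ infinite_sum_zero (prob_spec A))
         |refine (infinite_sum_le _ _ _ _ _ (prob_spec A) (proj2 Hp))];
  intro n; generalize (pmf_nonneg n); destruct (A n); lra.
Qed.

Lemma weighted_events_sum (V : list R) (B : R -> nat -> bool) :
  infinite_sum (fun n => p n * lsum V (fun v => if B v n then v else 0))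
               (lsum V (fun v => v * prob (B v))).
Proof.
  apply (infinite_sum_ext (fun n => lsum V (fun v => v * (if B v n then p n else 0)))).
  - intro n; rewrite <- lsum_scal; apply lsum_ext; intro v; destruct (B v n); ring.
  - apply infinite_sum_lsum; intros v _; apply infinite_sum_scal, prob_spec.
Qed.

Definition values (Y : nat -> R) (N : nat) : list R :=
  nodup Req_EM_T (map (fun n => Rmax 0 (Y n)) (seq 0 (S N))).

Lemma values_nonneg Y N v : In v (values Y N) -> 0 <= v.
Proof.
  intros Hv; apply nodup_In, in_map_iff in Hv; destruct Hv as [n [<- _]]; apply Rmax_l.
Qed.

Lemma partial_expect_le_values (Y : nat -> R) N :
  (forall n, 0 < p n -> 0 <= Y n) ->
  sum_f_R0 (fun n => p n * Y n) N
    <= lsum (values Y N) (fun v => v * prob (fun n => eqRb (Y n) v)).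
Proof.
  intros HY; set (V := values Y N).
  set (g := fun n => lsum V (fun v => if eqRb (Y n) v then v else 0)).
  apply (Rle_trans _ (sum_f_R0 (fun n => p n * g n) N)).
  - apply sum_Rle; intros n Hn.
    destruct (pmf_nonneg n) as [Hpn|<-]; [|lra].
    apply Rmult_le_compat_l; [lra|]; apply lsum_select_ge; [|apply values_nonneg].
    apply nodup_In, in_map_iff; exists n; split; [now apply Rmax_right, HY|].
    apply in_seq; lia.
  - apply sum_incr; [apply weighted_events_sum|].
    intro n; apply Rmult_le_pos; [apply pmf_nonneg|].
    apply lsum_nonneg; intros v Hv; destruct (eqRb (Y n) v); [exact (values_nonneg _ _ _ Hv)|lra].
Qed.

End DiscreteProbability.

Definition all_zero (t : nat) (x : nat -> R) : bool :=
  forallb (fun i => eqRb (x i) 0) (seq 0 t).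

Definition others_zero (t : nat) (x : nat -> R) (j : nat) : bool :=
  forallb (fun i => Nat.eqb i j || eqRb (x i) 0)%bool (seq 0 t).

Definition maxl (t : nat) (x : nat -> R) : R := fold_right Rmax 0 (map x (seq 0 t)).

Lemma maxl_nonneg t x : 0 <= maxl t x.
Proof.
  unfold maxl; induction (seq 0 t); simpl; [lra|].
  eapply Rle_trans; [exact IHl|apply Rmax_r].
Qed.

Lemma maxl_ge t x j : (j < t)%nat -> x j <= maxl t x.
Proof.
  intros Hj; unfold maxl; assert (Hin : In j (seq 0 t)) by (apply in_seq; lia).
  induction (seq 0 t) as [|a l IH]; simpl; [destruct Hin|].
  destruct Hin as [->|Hin]; [apply Rmax_l|].
  eapply Rle_trans; [apply IH; auto|apply Rmax_r].
Qed.

Lemma all_zero_false t x : all_zero t x = false -> exists i, (i < t)%nat /\ x i <> 0.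
Proof.
  assert (Hlist : forall l, forallb (fun i => eqRb (x i) 0) l = false ->
                            exists i, In i l /\ x i <> 0).
  { induction l as [|a l IH]; simpl; [discriminate|].
    destruct (eqRb (x a) 0) eqn:Ea; simpl.
    - intros Hl; destruct (IH Hl) as [i [Hi Hxi]]; exists i; auto.
    - intros _; exists a; split; [now left|]; intros Hx; apply eqRb_spec in Hx; congruence. }
  intros Hz; destruct (Hlist _ Hz) as [i [Hi Hxi]]; apply in_seq in Hi.
  exists i; split; [lia|exact Hxi].
Qed.

Lemma maxl_ge_level t x L :
  (forall j, (j < t)%nat -> x j = 0 \/ L <= x j) -> all_zero t x = false ->
  L <= maxl t x.
Proof.
  intros H0L Hz; destruct (all_zero_false t x Hz) as [i [Hi Hxi]].
  destruct (H0L i Hi) as [|HL]; [contradiction|].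
  eapply Rle_trans; [exact HL|apply maxl_ge, Hi].
Qed.

(* For nonnegative x, at most one term x_j 1{x_i = 0 for i <> j} is nonzero,
   so their sum is bounded by the maximum. *)
Lemma isolated_sum_le_max t x :
  (forall j, (j < t)%nat -> 0 <= x j) ->
  lsum (seq 0 t) (fun j => if others_zero t x j then x j else 0) <= maxl t x.
Proof.
  intros Hnn; destruct (all_zero t x) eqn:Hz.
  - rewrite lsum_zero; [apply maxl_nonneg|]; intros j Hj.
    unfold all_zero in Hz; rewrite forallb_forall in Hz.
    destruct (others_zero t x j); [apply eqRb_spec, Hz, Hj|reflexivity].
  - destruct (all_zero_false t x Hz) as [k [Hk Hxk]].
    eapply Rle_trans; [apply (lsum_le_single _ _ k (seq_NoDup t 0))|].
    + intros j Hj Hjk; destruct (others_zero t x j) eqn:Hoz; [|reflexivity].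
      unfold others_zero in Hoz; rewrite forallb_forall in Hoz.
      assert (Hkk := Hoz k ltac:(apply in_seq; lia)).
      apply Bool.orb_true_iff in Hkk; destruct Hkk as [Hkj|Hkx].
      * apply Nat.eqb_eq in Hkj; congruence.
      * apply eqRb_spec in Hkx; contradiction.
    + apply Rmax_lub; [|apply maxl_nonneg].
      destruct (others_zero t x k); [apply maxl_ge, Hk|apply maxl_nonneg].
Qed.

Lemma prod_replace (f g : nat -> R) l j :
  NoDup l -> In j l -> (forall i, i <> j -> f i = g i) ->
  fold_right Rmult 1 (map f l) * g j = fold_right Rmult 1 (map g l) * f j.
Proof.
  induction l as [|a l IH]; intros ND Hin H; [destruct Hin|].
  inversion ND as [|? ? Hal NDl]; subst; simpl.
  destruct Hin as [<-|Hin].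
  - replace (map f l) with (map g l); [ring|].
    apply map_ext_in; intros i Hi; symmetry; apply H; intros ->; contradiction.
  - rewrite H by (intros ->; contradiction).
    rewrite Rmult_assoc, IH by auto; ring.
Qed.

Lemma esum_bound (E : nat -> ereal) (B : nat -> R) c l :
  (forall j, In j l -> exists e, E j = EFin e /\ c * e <= B j) ->
  exists s, fold_right eadd (EFin 0) (map E l) = EFin s /\ c * s <= lsum l B.
Proof.
  induction l as [|a l IH]; intros H; cbn [map fold_right].
  - exists 0; split; [reflexivity|]; rewrite lsum_nil; lra.
  - destruct (H a (or_introl eq_refl)) as [e [-> He]].
    destruct IH as [s [-> Hs]]; [intros; apply H; now right|].
    exists (e + s); split; [reflexivity|]; rewrite lsum_cons; lra.
Qed.

Section IndependentFamily.

Variables (p : nat -> R) (t : nat) (X : nat -> nat -> R).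
Hypothesis Hp : is_pmf p.
Hypothesis Hind : independent p t X.
Hypothesis Hnn : forall j n, (j < t)%nat -> 0 < p n -> 0 <= X j n.

Definition P0 : R := prob p Hp (fun n => all_zero t (fun i => X i n)).

Definition joint (j : nat) (v : R) (n : nat) : bool :=
  forallb (fun i => eqRb (X i n) (if Nat.eqb i j then v else 0)) (seq 0 t).

Definition isolated (j n : nat) : R :=
  if others_zero t (fun i => X i n) j then X j n else 0.

Lemma P0_bounds : 0 <= P0 <= 1.
Proof. apply prob_bounds. Qed.

(* Independence: P(X_j = v, X_i = 0 for i <> j) * P(X_j = 0) = P0 * P(X_j = v),
   so P(X_j = v, X_i = 0 for i <> j) >= P0 * P(X_j = v). *)
Lemma joint_prob_ge j v :
  (j < t)%nat -> P0 * prob p Hp (fun n => eqRb (X j n) v) <= prob p Hp (joint j v).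
Proof.
  intros Hj.
  set (q := fun i => prob p Hp (fun n => eqRb (X i n) 0)).
  set (rs := fun i => if Nat.eqb i j then prob p Hp (fun n => eqRb (X j n) v) else q i).
  assert (HP0 : P0 = fold_right Rmult 1 (map q (seq 0 t)))
    by (refine (Hind (fun _ => 0) P0 q (prob_spec _ _ _) _); intros; apply prob_spec).
  assert (Hjoint : prob p Hp (joint j v) = fold_right Rmult 1 (map rs (seq 0 t))).
  { refine (Hind (fun i => if Nat.eqb i j then v else 0) _ rs (prob_spec _ _ _) _).
    intros i _; unfold rs; destruct (Nat.eqb_spec i j) as [->|]; apply prob_spec. }
  assert (Hswap := prod_replace rs q (seq 0 t) j (seq_NoDup t 0) ltac:(apply in_seq; lia)).
  rewrite <- Hjoint, <- HP0 in Hswap.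
  unfold rs at 2 in Hswap; rewrite Nat.eqb_refl in Hswap.
  specialize (Hswap ltac:(intros i Hij; unfold rs; apply Nat.eqb_neq in Hij; now rewrite Hij)).
  assert (Hq := prob_bounds p Hp (fun n => eqRb (X j n) 0)).
  assert (Hpj := prob_bounds p Hp (joint j v)).
  fold (q j) in Hq; nra.
Qed.

Lemma joint_isolated j v n :
  (j < t)%nat -> joint j v n = true -> isolated j n = v.
Proof.
  intros Hj Hjoint; unfold joint in Hjoint; rewrite forallb_forall in Hjoint.
  assert (Hxj : X j n = v).
  { assert (Hh := Hjoint j ltac:(apply in_seq; lia)).
    rewrite Nat.eqb_refl in Hh; now apply eqRb_spec. }
  unfold isolated; replace (others_zero t (fun i => X i n) j) with true; [exact Hxj|].
  symmetry; apply forallb_forall; intros i Hi.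
  destruct (Nat.eqb i j) eqn:Eij; [reflexivity|].
  assert (Hh := Hjoint i Hi); now rewrite Eij in Hh.
Qed.

(* The key estimate E[X_j 1{X_i = 0, i <> j}] >= P0 * E[X_j], stated on the
   partial sums of E[X_j]: decompose along the values v taken by X_j and use
   joint_prob_ge for each v. *)
Lemma isolated_partial_bound j a N :
  (j < t)%nat -> infinite_sum (fun n => p n * isolated j n) a ->
  P0 * sum_f_R0 (fun n => p n * X j n) N <= a.
Proof.
  intros Hj Ha; set (V := values (X j) N).
  assert (Hvalues := partial_expect_le_values p Hp (X j) N (fun n => Hnn j n Hj)).
  assert (Hjoint : P0 * lsum V (fun v => v * prob p Hp (fun n => eqRb (X j n) v))
                     <= lsum V (fun v => v * prob p Hp (joint j v))).
  { rewrite <- lsum_scal; apply lsum_le; intros v Hv.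
    generalize (joint_prob_ge j v Hj) (values_nonneg _ _ _ Hv); nra. }
  assert (Hiso : lsum V (fun v => v * prob p Hp (joint j v)) <= a).
  { refine (infinite_sum_le _ _ _ _ _ (weighted_events_sum p Hp V (joint j)) Ha).
    intro n; destruct (pmf_nonneg p Hp n) as [Hpn|<-]; [|lra].
    apply Rmult_le_compat_l; [lra|].
    apply lsum_select_le; [apply NoDup_nodup| |].
    - intros v _ Hjv; symmetry; exact (joint_isolated j v n Hj Hjv).
    - unfold isolated; destruct (others_zero t (fun i => X i n) j); [now apply Hnn|lra]. }
  fold V in Hvalues; generalize P0_bounds; nra.
Qed.

Lemma isolated_expect_bound j e a :
  (j < t)%nat -> 0 < P0 -> is_expect p (X j) e ->
  infinite_sum (fun n => p n * isolated j n) a ->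
  exists r, e = EFin r /\ P0 * r <= a.
Proof.
  intros Hj HP0 He Ha.
  destruct (is_expect_bounded p (X j) e (a / P0)) as [r [-> Hr]]; [|exact He|].
  - intro N; apply (Rmult_le_reg_l P0); [exact HP0|].
    rewrite <- (Rmult_comm (a / P0)); unfold Rdiv; rewrite Rmult_assoc, Rinv_l, Rmult_1_r by lra.
    exact (isolated_partial_bound j a N Hj Ha).
  - exists r; split; [reflexivity|].
    apply (Rmult_le_compat_l P0) in Hr; [|lra].
    replace (P0 * (a / P0)) with a in Hr by (field; lra); exact Hr.
Qed.

Lemma max_expect_ge_isolated r :
  infinite_sum (fun n => p n * maxX t X n) r ->
  exists A, (forall j, In j (seq 0 t) -> infinite_sum (fun n => p n * isolated j n) (A j))
            /\ lsum (seq 0 t) A <= r.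
Proof.
  apply series_family_le.
  - intros j n Hj; apply in_seq in Hj.
    destruct (pmf_nonneg p Hp n) as [Hpn|<-]; [|lra].
    apply Rmult_le_pos; [lra|]; unfold isolated.
    destruct (others_zero t (fun i => X i n) j); [apply Hnn; auto; lia|lra].
  - intro n; rewrite lsum_scal.
    destruct (pmf_nonneg p Hp n) as [Hpn|<-]; [|lra].
    apply Rmult_le_compat_l; [lra|].
    apply (isolated_sum_le_max t (fun i => X i n)); intros j Hj; now apply Hnn.
Qed.

Lemma max_expect_ge_nonzero L r :
  0 < L -> (forall j n, (j < t)%nat -> 0 < p n -> X j n = 0 \/ L <= X j n) ->
  infinite_sum (fun n => p n * maxX t X n) r -> L * (1 - P0) <= r.
Proof.
  intros HL H0L Hr.
  assert (Hs : infinite_sum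
                 (fun n => L * (p n + -1 * (if all_zero t (fun i => X i n) then p n else 0)))
                 (L * (1 + -1 * P0)))
    by (apply infinite_sum_scal, infinite_sum_plus;
        [exact (proj2 Hp)|apply infinite_sum_scal, prob_spec]).
  replace (L * (1 - P0)) with (L * (1 + -1 * P0)) by ring.
  refine (infinite_sum_le _ _ _ _ _ Hs Hr); intro n.
  assert (Hmax : 0 <= maxX t X n) by apply maxl_nonneg.
  destruct (pmf_nonneg p Hp n) as [Hpn|<-]; [|destruct (all_zero _ _); lra].
  destruct (all_zero t (fun i => X i n)) eqn:Hz; [nra|].
  assert (L <= maxX t X n) by (apply maxl_ge_level; auto); nra.
Qed.

End IndependentFamily.

Theorem mainTheorem3 (L : R) (t : nat) (p : nat -> R) (X : nat -> nat -> R)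
  (E : nat -> ereal) :
  0 < L ->
  is_pmf p ->
  independent p t X ->
  (forall j n, (j < t)%nat -> 0 < p n -> 0 <= X j n) ->
  (forall j n, (j < t)%nat -> 0 < p n -> X j n = 0 \/ L <= X j n) ->
  (forall j, (j < t)%nat -> is_expect p (X j) (E j)) ->
  ele L (esum t E) ->
  forall Emax, is_expect p (maxX t X) Emax -> ele (L / 2) Emax.
Proof.
  intros HL Hp Hind Hnn H0L HE Hsum Emax HEmax.
  destruct Emax as [r|]; [simpl in HEmax |- *|exact I].
  destruct (Rle_lt_dec (P0 p t X Hp) (1 / 2)) as [Hsmall|Hlarge].
  - (* P0 <= 1/2: the max is >= L off the all-zero event. *)
    assert (Hr := max_expect_ge_nonzero p t X Hp L r HL H0L HEmax); nra.
  - (* P0 > 1/2: the isolated parts capture a P0-fraction of each E[X_j]. *)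
    destruct (max_expect_ge_isolated p t X Hp Hnn r HEmax) as [A [HA HAr]].
    destruct (esum_bound E A (P0 p t X Hp) (seq 0 t)) as [s [Hs HsA]].
    + intros j Hj; apply in_seq in Hj.
      apply (isolated_expect_bound p t X Hp Hind Hnn j); [lia|lra|apply HE; lia|].
      apply HA, in_seq; lia.
    + unfold esum in Hsum; rewrite Hs in Hsum; simpl in Hsum; nra.
Qed.
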